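(* Let $l:\Phi\rightarrow\mathbb{K}^{\succ 1}\setminus\{0\}$ be a map. Then $l$ extends to a series morphism on $\Gamma$ (i.e. for every anti-well-ordered subset $E\subseteq\Phi$ the family $(l(\phi))_{\phi\in E}$ is summable, so that $l(\alpha):=\sum_{\phi\in\operatorname{supp}\alpha}\alpha_\phi\, l(\phi)$ is defined for every $\alpha=\prod_{\phi\in\operatorname{supp}\alpha}\phi^{\alpha_\phi}\in\Gamma$) if and only if the following condition fails: (HL1) there exist a strictly decreasing sequence $(\phi_n)_{n\in\mathbb{N}}\subseteq\Phi$ and an increasing sequence $(\lambda^{(n)})_{n\in\mathbb{N}}\subseteq\Gamma$ such that $\lambda^{(n)}\in\operatorname{Supp} l(\phi_n)$ for every $n$. Moreover, such an extension $l:\Gamma\to\mathbb{K}^{\succ1}$ is a pre-logarithmic section if and only if for all $\phi\prec\psi$ in $\Phi$ one has $0<l(\phi)<l(\psi)$. Moreover, such a pre-logarithmic section $l$ satisfies the Growth Axiom (GA) if and only if $\mathrm{LF}(l(\phi))\prec\phi$ for every $\phi\in\Phi$.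
   Context: Let $(\Phi,\preccurlyeq)$ be a totally ordered set. The Hahn group $\mathbf{H}(\Phi)$ is the set of formal products $\gamma=\prod_{\phi\in\operatorname{supp}\gamma}\phi^{\gamma_\phi}$ with real exponents $\gamma_\phi$, whose support $\operatorname{supp}\gamma=\{\phi:\gamma_\phi\neq 0\}$ is anti-well-ordered (every nonempty subset has a greatest element); multiplication is pointwise on exponents and the order is anti-lexicographic: $\gamma\succ 1$ iff $\gamma\neq1$ and the exponent of $\max\operatorname{supp}\gamma$ is positive. Each $\phi\in\Phi$ is identified with $\phi^1$ (so $\phi\succ 1$). Fix a subgroup $\Gamma$ of $\mathbf{H}(\Phi)$ containing $\Phi$; elements of $\Phi$ are called fundamental monomials, $\Gamma^{\succ1}=\{\gamma\in\Gamma:\gamma\succ1\}$. For $1\neq\gamma\in\Gamma$, $\mathrm{LF}(\gamma)=\max\operatorname{supp}\gamma$ and $\mathrm{LE}(\gamma)=\gamma_{\mathrm{LF}(\gamma)}$. $\mathbb{K}=\mathbb{R}((\Gamma))$ is the field of formal series $a=\sum a_\alpha\alpha$ ($a_\alpha\in\mathbb{R}$) with anti-well-ordered support $\operatorname{Supp} a=\{\alpha\in\Gamma: a_\alpha\neq0\}$. For $a\neq 0$: $\mathrm{LM}(a)=\max\operatorname{Supp}a$, $\mathrm{LC}(a)=a_{\mathrm{LM}(a)}$, $\mathrm{LF}(a)=\mathrm{LF}(\mathrm{LM}(a))$; $a\prec b$ means $\mathrm{LM}(a)\prec\mathrm{LM}(b)$. $\mathbb{K}$ is ordered by: $a>0$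 iff $\mathrm{LC}(a)>0$. $\mathbb{K}^{\succ1}$ is the set of series with support in $\Gamma^{\succ 1}$. A family $(a_i)_{i\in I}$ in $\mathbb{K}$ is summable if $\bigcup_i\operatorname{Supp}a_i$ is anti-well-ordered and each $\alpha$ lies in $\operatorname{Supp}a_i$ for only finitely many $i$; its sum is then the series whose coefficient at $\alpha$ is $\sum_i a_{i,\alpha}$. A pre-logarithmic section is an embedding of ordered groups $l:(\Gamma,\cdot,\preccurlyeq)\to(\mathbb{K}^{\succ 1},+,\leq)$. (GA) means: $l(\alpha)\prec\alpha$ for all $\alpha\in\Gamma^{\succ 1}$. *)

From HB Require Import structures.
From mathcomp Require Import all_boot all_order all_algebra.
From mathcomp Require Import boolp classical_sets functions cardinality fsbigop reals.
Set Implicit Arguments. Unset Strict Implicit. Unset Printing Implicit Defensive.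
Import Order.TTheory GRing.Theory Num.Theory.
Local Open Scope ring_scope.
Local Open Scope classical_set_scope.

Section Hahn.
Context {dP : Order.disp_t} (Phi : orderType dP) (R : realType).

Definition awo {T : Type} (le : T -> T -> Prop) (A : set T) : Prop :=
  forall B : set T, B `<=` A -> B !=set0 -> exists2 b, B b & forall x, B x -> le x b.

(* Elements of H(Phi) are represented by their exponent functions gamma : Phi -> R;
   the group product is pointwise addition of exponents, the unit is 0. *)
Definition monom := Phi -> R.
Definition msupp (g : monom) : set Phi := [set phi | g phi <> 0].
Definition mdiv (b a : monom) : monom := fun phi => b phi - a phi.
Definition fund (phi : Phi) : monom := fun psi => if psi == phi then 1 else 0.

Definition is_LF (g : monom) (phi : Phi) : Prop :=
  g phi <> 0 /\ forall psi, g psi <> 0 -> (psi <= phi)%O.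

Definition mgt1 (g : monom) : Prop := exists phi, is_LF g phi /\ 0 < g phi.
Definition mlt (a b : monom) : Prop := mgt1 (mdiv b a).
Definition mle (a b : monom) : Prop := a = b \/ mlt a b.

Definition hahn_subgroup (Gam : set monom) : Prop :=
  (forall g, Gam g -> awo (fun x y => (x <= y)%O) (msupp g)) /\
  Gam (fun _ => 0) /\
  (forall a b, Gam a -> Gam b -> Gam (mdiv a b)) /\
  (forall phi, Gam (fund phi)).

Definition series := monom -> R.
Definition Supp (a : series) : set monom := [set m | a m <> 0].
Definition is_series (Gam : set monom) (a : series) : Prop :=
  Supp a `<=` Gam /\ awo mle (Supp a).
Definition in_Kgt1 (Gam : set monom) (a : series) : Prop :=
  is_series Gam a /\ Supp a `<=` mgt1.

Definition is_LM (a : series) (mu : monom) : Prop :=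
  a mu <> 0 /\ forall nu, a nu <> 0 -> mle nu mu.
Definition spos (a : series) : Prop := exists mu, is_LM a mu /\ 0 < a mu.
Definition slt (a b : series) : Prop := spos (fun m => b m - a m).
Definition sle (a b : series) : Prop := a = b \/ slt a b.
Definition sprec (a b : series) : Prop :=
  exists ma mb, is_LM a ma /\ is_LM b mb /\ mlt ma mb.

Definition summable {I : Type} (E : set I) (a : I -> series) : Prop :=
  awo mle [set m | exists2 i, E i & a i m <> 0] /\
  forall m, finite_set [set i | E i /\ a i m <> 0].

Definition extends_series_morphism (l : Phi -> series) : Prop :=
  forall E : set Phi, awo (fun x y => (x <= y)%O) E -> summable E l.

Definition lext (l : Phi -> series) (alpha : monom) : series :=
  fun m => \sum_(phi \in msupp alpha) (alpha phi * l phi m).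

Definition HL1 (Gam : set monom) (l : Phi -> series) : Prop :=
  exists (phin : nat -> Phi) (lam : nat -> monom),
    (forall n, (phin n.+1 < phin n)%O) /\
    (forall n, mle (lam n) (lam n.+1)) /\
    (forall n, Gam (lam n) /\ l (phin n) (lam n) <> 0).

Definition prelog_section (Gam : set monom) (L : monom -> series) : Prop :=
  (forall a, Gam a -> in_Kgt1 Gam (L a)) /\
  (forall a b, Gam a -> Gam b -> L (fun phi => a phi + b phi) = (fun m => L a m + L b m)) /\
  (forall a b, Gam a -> Gam b -> L a = L b -> a = b) /\
  (forall a b, Gam a -> Gam b -> mle a b -> sle (L a) (L b)).

Definition GA (Gam : set monom) (L : monom -> series) : Prop :=
  forall a, Gam a -> mgt1 a -> exists mu, is_LM (L a) mu /\ mlt mu a.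

End Hahn.

From HB Require Import structures.
From mathcomp Require Import all_boot all_order all_algebra.
From mathcomp Require Import boolp classical_sets functions cardinality fsbigop reals.
Import Order.TTheory Order.NatMonotonyTheory GRing.Theory Num.Theory.
Local Open Scope ring_scope.
Local Open Scope classical_set_scope.
Set Implicit Arguments. Unset Strict Implicit. Unset Printing Implicit Defensive.

(* A decreasing sequence of fundamental monomials is anti-well-ordered, so if
   (HL1) holds, summability would force the increasing [lam n] to stabilise and
   then one monomial to lie in infinitely many [Supp (l phi_n)]. Conversely a
   failure of summability over an anti-well-ordered [E] yields infinitely many
   [phi] in [E] sharing a monomial, or an increasing sequence in the union of the
   supports; a strictly decreasing subsequence of the indices then gives (HL1).
   When the [l phi] are positive and increase in dominance, [l alpha] has the
   leading monomial and sign of [l (LF alpha)], which gives an embedding;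
   conversely if [LM (l psi) <= LM (l phi)] with [phi < psi], then [psi / phi^n]
   is sent to a negative series for [n] large. The same identity
   [LM (l alpha) = LM (l (LF alpha))] reduces (GA) to [LF (l phi) < phi]. *)

Lemma inj_seq_infinite_set T (A : set T) (f : nat -> T) :
  (forall n, A (f n)) -> injective f -> infinite_set A.
Proof.
move=> Af finj finA; apply: infinite_nat.
have : finite_set (f @` setT) by apply: sub_finite_set finA => _ [n _ <-].
by rewrite (eq_finite_set (inj_card_eq (in2W finj))).
Qed.

Lemma infinite_set_inj_seq T (A : set T) : infinite_set A ->
  exists f : nat -> T, (forall n, A (f n)) /\ injective f.
Proof.
elim/Ppointed: T => T in A *; first by move=> /infinite_setN0 [x]; case: (no x).
move=> /infiniteP/pcard_leP[f]; exists (f : nat -> T); split.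
  by move=> n; apply: funS.
by move=> i j; apply: (@inj _ _ _ f); rewrite ?in_setT.
Qed.

Lemma chain_of_no_max T (r : T -> T -> Prop) (B : set T) :
  B !=set0 -> (forall x, B x -> exists2 y, B y & r x y) ->
  exists f : nat -> T, (forall n, B (f n)) /\ (forall n, r (f n) (f n.+1)).
Proof.
move=> [b0 Bb0] hnext.
have /choice[nxt Hnxt] : forall x, exists y, B x -> B y /\ r x y.
  move=> x; have [/hnext[y By rxy]|nBx] := pselect (B x); last by exists x.
  by exists y.
have Bf n : B (iter n nxt b0) by elim: n => //= n /Hnxt[].
by exists (fun n => iter n nxt b0); split=> // n; have [] := Hnxt _ (Bf n).
Qed.

Lemma sub_awo T (r : T -> T -> Prop) (A B : set T) :
  A `<=` B -> awo r B -> awo r A.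
Proof. by move=> AB aw C CA; apply: aw; apply: subset_trans CA AB. Qed.

Section AwoOrder.
Context {d : Order.disp_t} (T : orderType d).
Implicit Types (A B : set T) (f : nat -> T).

Lemma awoU A B : awo (fun x y => (x <= y)%O) A ->
  awo (fun x y => (x <= y)%O) B -> awo (fun x y => (x <= y)%O) (A `|` B).
Proof.
move=> hA hB C CAB [c Cc].
case: (pselect (C `&` A !=set0)) => [nA|nA]; case: (pselect (C `&` B !=set0)) => [nB|nB].
- have [x [Cx _] xm] := hA _ (@subIsetr _ _ _) nA.
  have [y [Cy _] ym] := hB _ (@subIsetr _ _ _) nB.
  case: (leP x y) => xy.
    exists y => // z /[dup] Cz /CAB[] hz; last by apply: ym.
    by apply: le_trans xy; apply: xm.
  exists x => // z /[dup] Cz /CAB[] hz; first by apply: xm.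
  by apply: le_trans (ltW xy); apply: ym.
- have [x [Cx _] xm] := hA _ (@subIsetr _ _ _) nA.
  exists x => // z /[dup] Cz /CAB[] hz; first by apply: xm.
  by case: nB; exists z.
- have [y [Cy _] ym] := hB _ (@subIsetr _ _ _) nB.
  exists y => // z /[dup] Cz /CAB[] hz; last by apply: ym.
  by case: nA; exists z.
- by case: (CAB _ Cc) => hc; [case: nA | case: nB]; exists c.
Qed.

Lemma decreasing_inj f : (forall n, (f n.+1 < f n)%O) -> injective f.
Proof.
move=> /nhomo_ltn_lt fdec n m e.
by case: (ltngtP n m) => // /fdec; rewrite e ltxx.
Qed.

Lemma decreasing_range_awo f : (forall n, (f n.+1 < f n)%O) ->
  awo (fun x y => (x <= y)%O) (range f).
Proof.
move=> /nhomo_ltn_lt fdec B BE [_ /[dup] /BE[n0 _ <-] Bn0].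
have exB : exists n, `[< B (f n) >] by exists n0; apply/asboolP.
case: (ex_minnP exB) => m /asboolP Bm mmin.
exists (f m) => // _ /[dup] /BE[k _ <-] /asboolP/mmin.
by rewrite leq_eqVlt => /orP[/eqP<-//|/fdec/ltW].
Qed.

(* Take at each stage the index of the maximum of the remaining tail, then
   jump past every index carrying the same value; finite fibres make the jump
   possible, and maximality makes the selected values strictly decrease. *)
Lemma awo_finite_fibres_decreasing_subseq (E : set T) (psi : nat -> T) :
  awo (fun x y => (x <= y)%O) E -> (forall n, E (psi n)) ->
  (forall v, exists b, forall n, psi n = v -> (n < b)%N) ->
  exists sigma : nat -> nat, (forall j, (sigma j < sigma j.+1)%N) /\
    (forall j, (psi (sigma j.+1) < psi (sigma j))%O).
Proof.
move=> aw Epsi /choice[bound Hbound].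
have /choice[M HM] : forall k, exists n,
    (k <= n)%N /\ forall n', (k <= n')%N -> (psi n' <= psi n)%O.
  move=> k; set tail := [set psi n | n in [set n | (k <= n)%N]].
  have tailE : tail `<=` E by move=> _ [n _ <-].
  have [|_ [n kn <-] nmax] := aw _ tailE; first by exists (psi k); exists k => /=.
  by exists n; split=> // n' kn'; apply: nmax; exists n'.
pose k := fix k j := if j is j'.+1 then bound (psi (M (k j'))) else 0%N.
have Mk j : (M (k j) < M (k j.+1))%N.
  by apply: leq_trans (HM (k j.+1)).1; apply: Hbound.
exists (fun j => M (k j)); split=> // j; rewrite lt_neqAle.
apply/andP; split; last first.
  by apply: (HM (k j)).2; apply: leq_trans (ltnW (Mk j)); exact: (HM (k j)).1.
apply/eqP => /Hbound; apply/negP; rewrite -leqNgt.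
exact: (HM (k j.+1)).1.
Qed.

End AwoOrder.

Section MonomialOrder.
Context {dP : Order.disp_t} (Phi : orderType dP) (R : realType).
Implicit Types (a b c g h : monom Phi R) (p q : Phi).

Lemma mgt1_add_lower g h q : is_LF h q -> 0 < h q ->
  (forall x, g x <> 0 -> (x < q)%O) -> mgt1 (fun x => g x + h x).
Proof.
move=> [hq0 hmax] hq glow.
have gq : g q = 0 by apply: contrapT => /glow; rewrite ltxx.
exists q; rewrite /is_LF gq add0r; split=> //; split=> // x.
have [->|/eqP gx0] := eqVneq (g x) 0; first by rewrite add0r; apply: hmax.
by move=> _; apply/ltW/glow.
Qed.

Lemma mgt1_add g h : mgt1 g -> mgt1 h -> mgt1 (fun x => g x + h x).
Proof.
move=> [p [[gp0 gmax] gp]] [q [[hq0 hmax] hq]].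
case: (ltgtP p q) => [pq|qp|epq]; last subst q.
- by apply: (mgt1_add_lower (conj hq0 hmax)) => // x /gmax/le_lt_trans; apply.
- under eq_fun do rewrite addrC.
  by apply: (mgt1_add_lower (conj gp0 gmax)) => // x /hmax/le_lt_trans; apply.
have pos : 0 < g p + h p by rewrite addr_gt0.
exists p; split=> //; split; first by apply/eqP; rewrite gt_eqF.
move=> x; have [->|/eqP gx0] := eqVneq (g x) 0; first by rewrite add0r; apply: hmax.
by move=> _; apply: gmax.
Qed.

Lemma mlt_trans a b c : mlt a b -> mlt b c -> mlt a c.
Proof.
move=> ab bc; have := mgt1_add bc ab; rewrite /mlt /mdiv.
by under eq_fun do rewrite addrA subrK.
Qed.

Lemma mlt_irr a : ~ mlt a a.
Proof. by move=> [p [[+ _] _]]; rewrite /mdiv subrr. Qed.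

Lemma mlt_asym a b : mlt a b -> ~ mlt b a.
Proof. by move=> ab ba; apply: (@mlt_irr a); apply: mlt_trans ab ba. Qed.

Lemma mle_refl a : mle a a.
Proof. by left. Qed.

Lemma mle_trans a b c : mle a b -> mle b c -> mle a c.
Proof. by case=> [->//|ab] [<-|bc]; right=> //; apply: mlt_trans ab bc. Qed.

Lemma mle_anti a b : mle a b -> mle b a -> a = b.
Proof. by case=> [//|ab] [//|/(mlt_asym ab)]. Qed.

Lemma mle_lt_trans a b c : mle a b -> mlt b c -> mlt a c.
Proof. by case=> [->//|ab] bc; apply: mlt_trans ab bc. Qed.

Lemma mle_ltF a b : mle a b -> ~ mlt b a.
Proof. by move=> ab ba; apply: (@mlt_irr a); apply: mle_lt_trans ab ba. Qed.

Lemma mgt1_mlt0 a : mgt1 a -> mlt (fun _ => 0) a.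
Proof. by rewrite /mlt /mdiv; under eq_fun do rewrite subr0. Qed.

Lemma mgt1_fund p : mgt1 (fund R p).
Proof.
exists p; split; [split|]; rewrite /fund ?eqxx ?ltr01 //; first exact/eqP/oner_neq0.
by move=> q; case: eqP => [->|].
Qed.

Lemma mlt_total a b : awo (fun x y => (x <= y)%O) (msupp (mdiv b a)) ->
  [\/ a = b, mlt a b | mlt b a].
Proof.
move=> aw; have [e0|/set0P ne] := eqVneq (msupp (mdiv b a)) set0.
  apply: Or31; apply/funext => x; apply/eqP; rewrite eq_sym -subr_eq0.
  by apply/negP => /negP/eqP hx; have : set0 x by rewrite -e0.
have [p ba0 pmax] := aw _ (@subset_refl _ _) ne.
have [pos|neg] := ltP 0 (mdiv b a p); first by apply: Or32; exists p.
apply: Or33; exists p; split.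
  split=> [|x]; rewrite /mdiv -opprB => /eqP; rewrite oppr_eq0 => /eqP //.
  exact: pmax.
by rewrite /mdiv -opprB oppr_gt0 lt_neqAle neg andbT; apply/eqP.
Qed.

Lemma increasing_mlt (f : nat -> monom Phi R) :
  (forall n, mlt (f n) (f n.+1)) -> {homo f : i j / (i < j)%N >-> mlt i j}.
Proof. by apply: homo_ltn => y x z; apply: mlt_trans. Qed.

Lemma nondecreasing_mle (f : nat -> monom Phi R) :
  (forall n, mle (f n) (f n.+1)) -> {homo f : i j / (i <= j)%N >-> mle i j}.
Proof. by apply: homo_leq => [|y x z]; [apply: mle_refl | apply: mle_trans]. Qed.

Lemma awo_cofinal_increasingF (A : set (monom Phi R)) (f : nat -> monom Phi R) :
  awo (@mle _ Phi R) A -> (forall n, mlt (f n) (f n.+1)) ->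
  ~ (forall k, exists2 n, (k <= n)%N & A (f n)).
Proof.
move=> aw /increasing_mlt finc cofinal.
set S := [set f n | n in [set n | A (f n)]].
have SA : S `<=` A by move=> _ [n An <-].
have [|_ [n An <-] nmax] := aw _ SA.
  by have [n _ An] := cofinal 0%N; exists (f n); exists n.
have [m nm Am] := cofinal n.+1.
by apply: mle_ltF (nmax (f m) _) (finc _ _ nm); exists m.
Qed.

Lemma is_LM_uniq (s : series Phi R) mu nu : is_LM s mu -> is_LM s nu -> mu = nu.
Proof. by move=> [s1 h1] [s2 h2]; apply: mle_anti; [apply: h2|apply: h1]. Qed.

Lemma sle0_LM_ge0 (s : series Phi R) mu :
  is_LM s mu -> sle (fun _ => 0) s -> 0 <= s mu.
Proof.
move=> [smu smax] [<-//|[nu [[+ numax] +]]]; rewrite /= !subr0 => nz pos.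
have numu : mle mu nu by apply: numax; rewrite subr0.
by rewrite -(mle_anti (smax _ nz) numu) ltW.
Qed.

Lemma spos_LM_gt0 (s : series Phi R) mu : spos s -> is_LM s mu -> 0 < s mu.
Proof. by move=> [nu [LMnu pos]] LMmu; rewrite -(is_LM_uniq LMnu LMmu). Qed.

Lemma mlt_LF_lt a b p q : is_LF a p -> is_LF b q -> 0 < b q -> (p < q)%O ->
  mlt a b.
Proof.
move=> [_ amax] [_ bmax] bq pq.
have aq : a q = 0 by apply: contrapT => /amax; rewrite leNgt pq.
exists q; rewrite /is_LF /mdiv aq subr0; split=> //.
split=> [|x]; first exact/eqP/lt0r_neq0.
have [ax|/eqP/amax ap _] := eqVneq (a x) 0; first by rewrite ax subr0; apply: bmax.
exact: le_trans ap (ltW pq).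
Qed.

Definition fund_ratio q p (n : nat) : monom Phi R :=
  fun x => fund R q x - n%:R * fund R p x.

Lemma fund_ratio0 q p : fund_ratio q p 0 = fund R q.
Proof. by apply/funext => x; rewrite /fund_ratio mul0r subr0. Qed.

Lemma fund_ratioS q p n :
  fund_ratio q p n.+1 = mdiv (fund_ratio q p n) (fund R p).
Proof.
by apply/funext => x; rewrite /fund_ratio /mdiv -natr1 mulrDl mul1r opprD addrA.
Qed.

Lemma mgt1_fund_ratio q p n : (p < q)%O -> mgt1 (fund_ratio q p n).
Proof.
move=> pq; have [qp qq] : fund R p q = 0 /\ fund R q q = 1.
  by rewrite /fund eqxx ifN // eq_sym lt_eqF.
exists q; rewrite /is_LF /fund_ratio qp qq mulr0 subr0 ltr01.
split=> //; split=> [|x]; first exact/eqP/oner_neq0.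
rewrite /fund; case: (eqVneq x q) => [->//|xq]; case: (eqVneq x p) => [->|xp].
  by move=> _; exact: ltW.
by rewrite mulr0 subrr.
Qed.

End MonomialOrder.

Arguments fund_ratio {dP Phi R}.

Section Extension.
Context {dP : Order.disp_t} (Phi : orderType dP) (R : realType).
Variable l : Phi -> series Phi R.
Implicit Types (a b : monom Phi R) (p q : Phi).

Lemma lext_neq0 a m : lext l a m <> 0 -> exists p, a p <> 0 /\ l p m <> 0.
Proof.
move=> h; apply: contrapT => hn; apply: h; apply: fsbig1 => p ap.
have -> : l p m = 0 by apply: contrapT => lp; apply: hn; exists p.
by rewrite mulr0.
Qed.

Lemma lext_single a m q : (forall p, p <> q -> a p * l p m = 0) ->
  lext l a m = a q * l q m.
Proof.
rewrite /lext => h; have [aq0|aq] := eqVneq (a q) 0.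
  by rewrite aq0 mul0r; apply: fsbig1 => p ap; apply: h => epq; apply: ap; rewrite epq.
rewrite -(fsbig_widen [set q] (msupp a)) ?fsbig_set1 //.
  by move=> _ ->; apply/eqP.
by move=> p [_ npq]; apply: h.
Qed.

(* [lext] is an [fsbig], which is [0] when infinitely many summands are
   nonzero; the hypothesis makes all three sums genuine finite sums. *)
Lemma lext_add a b m :
  finite_set [set p | (msupp a `|` msupp b) p /\ l p m <> 0] ->
  lext l (fun x => a x + b x) m = lext l a m + lext l b m.
Proof.
set D := msupp a `|` msupp b; set F := [set p | D p /\ l p m <> 0] => finF.
have onF c : msupp c `<=` D -> lext l c m = \sum_(p \in F) c p * l p m.
  move=> cD; rewrite /lext (fsbig_widen (msupp c) D) //; last first.
    by move=> p [_ /= /contrapT ->]; rewrite mul0r.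
  rewrite -(fsbig_widen F D) //; first by move=> p [].
  move=> p [Dp nF] /=; rewrite (_ : l p m = 0) ?mulr0 //.
  by apply: contrapT => ?; apply: nF.
have sab : msupp (fun x => a x + b x) `<=` D.
  move=> p /= hp; have [a0|/eqP a0] := eqVneq (a p) 0; last by left.
  by right; rewrite /msupp /= a0 add0r in hp.
have sa : msupp a `<=` D by move=> p ap; left.
have sb : msupp b `<=` D by move=> p bp; right.
rewrite (onF _ sa) (onF _ sb) (onF _ sab) -fsbig_split //.
by apply: eq_fsbigr => p _; rewrite mulrDl.
Qed.

Lemma lext_fund p : lext l (fund R p) = l p.
Proof.
apply/funext => m; rewrite (@lext_single _ _ p) /fund ?eqxx ?mul1r //.
by move=> q qp; rewrite ifN ?mul0r //; apply/eqP.
Qed.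

Lemma lext0 : lext l (fun _ => 0) = (fun _ => 0).
Proof. by apply/funext => m; apply: fsbig1 => p hp; case: hp. Qed.

End Extension.

Section SeriesMorphism.
Context {dP : Order.disp_t} (Phi : orderType dP) (R : realType).
Variables (Gam : set (monom Phi R)) (l : Phi -> series Phi R).
Hypothesis Gam_subgroup : hahn_subgroup Gam.
Hypothesis l_Kgt1 : forall phi, in_Kgt1 Gam (l phi) /\ l phi <> (fun _ => 0).
Implicit Types (a b c : monom Phi R) (p q : Phi) (E : set Phi).

Let awo_msupp a : Gam a -> awo (fun x y => (x <= y)%O) (msupp a).
Proof. by case: Gam_subgroup => h _; apply: h. Qed.
Let Gam_mdiv a b : Gam a -> Gam b -> Gam (mdiv a b).
Proof. by case: Gam_subgroup => _ [_ [h _]]; apply: h. Qed.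
Let Gam_fund p : Gam (fund R p).
Proof. by case: Gam_subgroup => _ [_ [_ h]]; apply: h. Qed.
Let Gam0 : Gam (fun _ => 0).
Proof. by case: Gam_subgroup => _ [h _]. Qed.

Let Gam_Supp p m : l p m <> 0 -> Gam m.
Proof. by case: (l_Kgt1 p) => [[[h _] _] _]; apply: h. Qed.
Let awo_Supp p : awo (@mle _ Phi R) (Supp (l p)).
Proof. by case: (l_Kgt1 p) => [[[_ h] _] _]. Qed.
Let mgt1_Supp p m : l p m <> 0 -> mgt1 m.
Proof. by case: (l_Kgt1 p) => [[_ h] _]; apply: h. Qed.

Lemma Gam_mlt_total a b : Gam a -> Gam b -> [\/ a = b, mlt a b | mlt b a].
Proof. by move=> Ga Gb; apply/mlt_total/awo_msupp/Gam_mdiv. Qed.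

Lemma l_has_LM p : exists mu, is_LM (l p) mu.
Proof.
have [|mu Smu mmax] := @awo_Supp p _ (@subset_refl _ (Supp (l p))); last by exists mu.
apply: contra_notP (l_Kgt1 p).2 => hn.
by apply/funext => m; apply: contrapT => lm; apply: hn; exists m.
Qed.

Lemma series_morphism_notHL1 : extends_series_morphism l -> ~ HL1 Gam l.
Proof.
move=> lsm [phin [lam [phin_dec [/nondecreasing_mle lam_inc hl]]]].
have [aw fin] := lsm _ (decreasing_range_awo phin_dec).
set U := [set m | exists2 i, range phin i & l i m <> 0].
have lamU : range lam `<=` U.
  by move=> _ [n _ <-]; exists (phin n); [exists n | exact: (hl n).2].
have [|_ [k _ <-] kmax] := aw _ lamU; first by exists (lam 0%N); exists 0%N.
have lam_stable n : (k <= n)%N -> lam n = lam k.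
  by move=> kn; apply: mle_anti (lam_inc _ _ kn); apply: kmax; exists n.
apply: (inj_seq_infinite_set (f := fun n => phin (n + k)%N)) (fin (lam k)).
  move=> n; split; first by exists (n + k)%N.
  by rewrite -(lam_stable (n + k)%N) ?leq_addl //; exact: (hl _).2.
by move=> i j /(decreasing_inj phin_dec) /addIn.
Qed.

Lemma notHL1_finite_fibres E m : ~ HL1 Gam l ->
  awo (fun x y => (x <= y)%O) E -> finite_set [set p | E p /\ l p m <> 0].
Proof.
move=> nHL aw; apply: contrapT => /infinite_set_inj_seq [psi [Fpsi psi_inj]].
have [|sigma [_ dec]] := awo_finite_fibres_decreasing_subseq aw (fun n => (Fpsi n).1).
  move=> v; have [[n0 e0]|ne] := pselect (exists n, psi n = v); last first.
    by exists 0%N => n e; case: ne; exists n.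
  by exists n0.+1 => n; rewrite -e0 => /psi_inj ->.
apply: nHL; exists (fun j => psi (sigma j)), (fun _ => m).
split=> //; split=> [n|n]; first exact: mle_refl.
by split; [exact: (Gam_Supp (Fpsi 0%N).2) | exact: (Fpsi _).2].
Qed.

(* A nonempty subset of the union without maximum yields an increasing
   sequence [lam]; choosing [phi n] with [lam n] in [Supp (l (phi n))], no
   [phi] can repeat infinitely often (the [Supp (l phi)] are anti-well-ordered),
   so a decreasing subsequence of [phi] together with [lam] witnesses (HL1). *)
Lemma notHL1_union_awo E : ~ HL1 Gam l -> awo (fun x y => (x <= y)%O) E ->
  awo (@mle _ Phi R) [set m | exists2 p, E p & l p m <> 0].
Proof.
move=> nHL aw B BU neB; apply: contrapT => nmax.
have /chain_of_no_max : forall x, B x -> exists2 y, B y & mlt x y.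
  move=> x Bx; apply: contrapT => hn; apply: nmax; exists x => // y By.
  have [i _ Gx] := BU _ Bx; have [j _ Gy] := BU _ By.
  have [->|xy|yx] := Gam_mlt_total (Gam_Supp Gx) (Gam_Supp Gy).
  - exact: mle_refl.
  - by case: hn; exists y.
  - by right.
move=> /(_ neB) [lam [Blam lam_inc]].
have /choice[phi Hphi] : forall n, exists p, E p /\ l p (lam n) <> 0.
  by move=> n; have [p Ep lp] := BU _ (Blam n); exists p.
have [[v cofinal]|finite_fibres] :=
    pselect (exists v, forall k, exists2 n, (k <= n)%N & phi n = v).
  apply: (awo_cofinal_increasingF (@awo_Supp v) lam_inc) => k.
  by have [n kn <-] := cofinal k; exists n => //; exact: (Hphi n).2.
have [|sigma [sigma_inc dec]] :=
    awo_finite_fibres_decreasing_subseq aw (fun n => (Hphi n).1).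
  move=> v; apply: contrapT => hn; apply: finite_fibres; exists v => k.
  apply: contrapT => hk; apply: hn; exists k => n e.
  by rewrite ltnNge; apply/negP => kn; apply: hk; exists n.
apply: nHL; exists (fun j => phi (sigma j)), (fun j => lam (sigma j)).
split=> //; split=> [j|j].
  by right; exact: increasing_mlt lam_inc _ _ (sigma_inc j).
by have [p _ /Gam_Supp] := BU _ (Blam (sigma j)); split=> //; exact: (Hphi _).2.
Qed.

Lemma notHL1_series_morphism : ~ HL1 Gam l -> extends_series_morphism l.
Proof.
move=> nHL E aw; split=> [|m]; first exact: notHL1_union_awo.
exact: notHL1_finite_fibres.
Qed.

Section PrelogSection.
Hypothesis lsm : extends_series_morphism l.

Lemma lext_addG a b m : Gam a -> Gam b ->
  lext l (fun x => a x + b x) m = lext l a m + lext l b m.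
Proof.
move=> Ga Gb; apply: lext_add.
exact: (lsm (awoU (awo_msupp Ga) (awo_msupp Gb))).2.
Qed.

Lemma lext_mdiv a b m : Gam a -> Gam b ->
  lext l (mdiv b a) m = lext l b m - lext l a m.
Proof.
move=> Ga Gb; have := lext_addG m Ga (Gam_mdiv Gb Ga).
have -> : (fun x => a x + mdiv b a x) = b by apply/funext => x; rewrite addrC subrK.
by move=> ->; rewrite addrAC subrr add0r.
Qed.

Lemma lext_Kgt1 a : Gam a -> in_Kgt1 Gam (lext l a).
Proof.
move=> Ga; have [aw _] := lsm (awo_msupp Ga); split; [split|].
- by move=> m /lext_neq0 [p [_ /Gam_Supp]].
- by apply: sub_awo aw => m /lext_neq0 [p [ap lp]]; exists p.
- by move=> m /lext_neq0 [p [_ /mgt1_Supp]].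
Qed.

Section Sufficiency.
Hypothesis l_spos : forall p, spos (l p).
Hypothesis l_sprec : forall p q, (p < q)%O -> sprec (l p) (l q).

Lemma Supp_l_mlt_LM p q mu nu : (p < q)%O -> is_LM (l q) mu -> l p nu <> 0 ->
  mlt nu mu.
Proof.
move=> /l_sprec [mp [mq [LMp [LMq mpq]]]] LMq' lpnu.
by rewrite -(is_LM_uniq LMq LMq'); apply: mle_lt_trans mpq; apply: LMp.2.
Qed.

(* Every [l p] with [p < LF c] lives strictly below [LM (l (LF c))], so the
   coefficient of [lext l c] there is [c (LF c) * LC (l (LF c))]. *)
Lemma LM_lext c p0 mu : is_LF c p0 -> 0 < c p0 -> is_LM (l p0) mu ->
  is_LM (lext l c) mu /\ 0 < lext l c mu.
Proof.
move=> [cp0 cmax] cpos [lp0 lmax].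
have val : lext l c mu = c p0 * l p0 mu.
  apply: lext_single => p np.
  have [->|/eqP cp] := eqVneq (c p) 0; first by rewrite mul0r.
  have pp0 : (p < p0)%O by rewrite lt_neqAle (cmax _ cp) andbT; apply/eqP.
  have [->|/eqP lp] := eqVneq (l p mu) 0; first by rewrite mulr0.
  by case: (mlt_irr (Supp_l_mlt_LM pp0 (conj lp0 lmax) lp)).
have pos : 0 < lext l c mu.
  by rewrite val mulr_gt0 // (spos_LM_gt0 (l_spos p0) (conj lp0 lmax)).
split=> //; split; first by apply/eqP; rewrite gt_eqF.
move=> nu /lext_neq0 [p [/cmax + lp]]; rewrite le_eqVlt => /orP[/eqP epp0|pp0].
  by apply: lmax; rewrite -epp0.
by right; apply: Supp_l_mlt_LM pp0 (conj lp0 lmax) lp.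
Qed.

Lemma lext_spos c : mgt1 c -> spos (lext l c).
Proof.
move=> [p0 [LFc cpos]]; have [mu LMmu] := l_has_LM p0.
by have := LM_lext LFc cpos LMmu; exists mu.
Qed.

Lemma prelog_section_lext : prelog_section Gam (lext l).
Proof.
split; [exact: lext_Kgt1 | split; [|split]].
- by move=> a b Ga Gb; apply/funext => m; apply: lext_addG.
- move=> a b Ga Gb eqab; have [//|ab|ba] := Gam_mlt_total Ga Gb.
  + have [mu [[] + _ _]] := lext_spos ab.
    by rewrite lext_mdiv // eqab subrr.
  + have [mu [[] + _ _]] := lext_spos ba.
    by rewrite lext_mdiv // eqab subrr.
- move=> a b Ga Gb [->|ab]; [by left | right].
  rewrite /slt -(funext (fun m => lext_mdiv m Ga Gb)).
  exact: lext_spos ab.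
Qed.

End Sufficiency.

Lemma Gam_fund_ratio q p n : Gam (fund_ratio q p n).
Proof.
by elim: n => [|n IH]; rewrite ?fund_ratio0 ?fund_ratioS //; apply: Gam_mdiv.
Qed.

Lemma lext_fund_ratio q p n m :
  lext l (fund_ratio q p n) m = l q m - n%:R * l p m.
Proof.
elim: n => [|n IH]; first by rewrite fund_ratio0 lext_fund mul0r subr0.
have [Gp Gn] := (Gam_fund p, Gam_fund_ratio q p n).
by rewrite fund_ratioS lext_mdiv // IH lext_fund -natr1 mulrDl mul1r opprD addrA.
Qed.

Section Necessity.
Hypothesis lext_prelog : prelog_section Gam (lext l).

Lemma prelog_sle0 a : Gam a -> mgt1 a -> sle (fun _ => 0) (lext l a).
Proof.
move=> Ga /mgt1_mlt0 a_gt1; rewrite -(lext0 l).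
by case: lext_prelog => _ [_ [_ mono]]; apply: mono Gam0 Ga _; right.
Qed.

Lemma prelog_spos_l p : spos (l p).
Proof.
have [|] := prelog_sle0 (Gam_fund p) (mgt1_fund R p); rewrite lext_fund.
  by move=> l0; case: (l_Kgt1 p).2.
by rewrite /slt; under eq_fun do rewrite subr0.
Qed.

(* If [LM (l q) <= LM (l p) = mp] then, for [n] large, [mp] is still the
   leading monomial of [lext l (q / p^n)] but its coefficient
   [l q mp - n * l p mp] is negative, although [q / p^n > 1]. *)
Lemma prelog_sprec_l p q : (p < q)%O -> sprec (l p) (l q).
Proof.
move=> pq; have [mp LMp] := l_has_LM p; have [mq LMq] := l_has_LM q.
have [mq_le_mp|mp_lt_mq] : mle mq mp \/ mlt mp mq; last by exists mp, mq.
  by have [->|lt|gt] := Gam_mlt_total (Gam_Supp LMp.1) (Gam_Supp LMq.1);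
    [left; left | right | left; right].
have cpos := spos_LM_gt0 (prelog_spos_l p) LMp.
pose n := Num.bound (`|l q mp| / l p mp).
have neg : lext l (fund_ratio q p n) mp < 0.
  rewrite lext_fund_ratio subr_lt0; apply: le_lt_trans (ler_norm _) _.
  by rewrite -ltr_pdivrMr // archi_boundP // divr_ge0 // ltW.
have LMn : is_LM (lext l (fund_ratio q p n)) mp.
  split=> [|nu]; first by apply/eqP; rewrite ltr0_neq0.
  rewrite lext_fund_ratio; have [->|/eqP lp] := eqVneq (l p nu) 0.
    by rewrite mulr0 subr0 => /LMq.2 /mle_trans; apply.
  by move=> _; apply: LMp.2.
have := sle0_LM_ge0 LMn (prelog_sle0 (Gam_fund_ratio q p n) (mgt1_fund_ratio R n pq)).
by rewrite leNgt neg.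
Qed.

Lemma prelog_LM_lext c p0 mu : is_LF c p0 -> 0 < c p0 -> is_LM (l p0) mu ->
  is_LM (lext l c) mu.
Proof.
by move=> LFc cpos LMmu; case: (LM_lext prelog_spos_l prelog_sprec_l LFc cpos LMmu).
Qed.

Lemma prelog_LM_le p q mp mq : (p <= q)%O -> is_LM (l p) mp -> is_LM (l q) mq ->
  mle mp mq.
Proof.
rewrite le_eqVlt => /orP[/eqP<- LMp LMq|/prelog_sprec_l].
  by left; apply: is_LM_uniq LMp LMq.
move=> [ma [mb [LMa [LMb ab]]]] LMp LMq; right.
by rewrite -(is_LM_uniq LMa LMp) -(is_LM_uniq LMb LMq).
Qed.

Lemma GA_LF_l : GA Gam (lext l) ->
  forall p, exists mu psi, is_LM (l p) mu /\ is_LF mu psi /\ (psi < p)%O.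
Proof.
move=> ga p; have [mu LMmu] := l_has_LM p.
have [psi [LFmu mu_psi]] := mgt1_Supp LMmu.1.
exists mu, psi; split=> //; split=> //; rewrite ltNge; apply/negP => p_le_psi.
have [nu [LMnu nu_mu]] := ga mu (Gam_Supp LMmu.1) (ex_intro _ psi (conj LFmu mu_psi)).
have [nu' LMnu'] := l_has_LM psi.
rewrite (is_LM_uniq LMnu (prelog_LM_lext LFmu mu_psi LMnu')) in nu_mu.
exact: mle_ltF (prelog_LM_le p_le_psi LMmu LMnu') nu_mu.
Qed.

Lemma LF_l_GA :
  (forall p, exists mu psi, is_LM (l p) mu /\ is_LF mu psi /\ (psi < p)%O) ->
  GA Gam (lext l).
Proof.
move=> LF_lt a Ga [p0 [LFa apos]]; have [mu [psi [LMmu [LFmu lt]]]] := LF_lt p0.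
exists mu; split; first exact: prelog_LM_lext LFa apos LMmu.
exact: mlt_LF_lt LFmu LFa apos lt.
Qed.

End Necessity.
End PrelogSection.
End SeriesMorphism.

Theorem mainTheorem1 (dP : Order.disp_t) (Phi : orderType dP) (R : realType)
    (Gam : set (monom Phi R)) (l : Phi -> series Phi R) :
  hahn_subgroup Gam ->
  (forall phi, in_Kgt1 Gam (l phi) /\ l phi <> (fun _ => 0)) ->
  (extends_series_morphism l <-> ~ HL1 Gam l) /\
  (extends_series_morphism l ->
     (prelog_section Gam (lext l) <->
        ((forall phi, spos (l phi)) /\
         (forall phi psi, (phi < psi)%O -> sprec (l phi) (l psi))))) /\
  (extends_series_morphism l -> prelog_section Gam (lext l) ->
     (GA Gam (lext l) <->
        (forall phi, exists mu psi, is_LM (l phi) mu /\ is_LF mu psi /\ (psi < phi)%O))).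
Proof.
move=> Gam_subgroup l_Kgt1; split; [|split].
- split; first exact: series_morphism_notHL1.
  exact: notHL1_series_morphism Gam_subgroup l_Kgt1.
- move=> lsm; split=> [pl|[l_spos l_sprec]].
    split=> [p|p q]; first exact: prelog_spos_l Gam_subgroup l_Kgt1 pl p.
    exact: prelog_sprec_l Gam_subgroup l_Kgt1 lsm pl p q.
  exact: prelog_section_lext Gam_subgroup l_Kgt1 lsm l_spos l_sprec.
- move=> lsm pl; split; first exact: GA_LF_l Gam_subgroup l_Kgt1 lsm pl.
  exact: LF_l_GA Gam_subgroup l_Kgt1 lsm pl.
Qed.
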